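(* Let $G$ be a temporal network whose TEG $\mathcal{G}$ is weakly connected, with each edge $(e_i,e_j)$ weighted by its inter-event time $\tau((e_i,e_j)) = t_j - t_i$. Consider paths in the underlying undirected graph of $\mathcal{G}$, i.e. sequences of vertices $x_0, x_1, \dots, x_k$ such that for each $r$ either $(x_{r-1},x_r)$ or $(x_r,x_{r-1})$ is an edge of $\mathcal{G}$. The signed length of such a path is $\sum_{r=1}^{k} s_r$, where $s_r = \tau((x_{r-1},x_r))$ if $(x_{r-1},x_r)$ is an edge of $\mathcal{G}$ (forward traversal) and $s_r = -\tau((x_r,x_{r-1}))$ otherwise (backward traversal). Then every path of maximal signed length contains both the earliest event and the latest event of the temporal network.
   Context: A temporal network is $G=G(V,E,T)$, where $V\subset\mathbb{N}$ is a set of nodes, $T\subset\mathbb{R}_{\ge 0}$ a non-empty set of times, and $E\subset V^2\times T$ a finite set of events $e_i=(u_i,v_i,t_i)$, with $u_i\neq v_i$. All event times $t_i$ are distinct, and events are indexed in increasing time order. For $\Delta t \in (0,\infty]$ and an event $e_i$ and a node $w\in\{u_i,v_i\}$, let $S(w;i)=\{k : w\in\{u_k,v_k\},\ 0<t_k-t_i<\Delta t\}$. The $\Delta t$-temporal event graph ($\Delta t$-TEG) is the directed graph whose vertex set is $E$ and whose edges are the pairs $(e_i,e_j)$ with $j=\min S(u_i;i)$ or $j=\min S(v_i;i)$ (i.e. each event is joined to the next event, within time $\Delta t$, of each of its two nodes). The TEG is the $\Delta t$-TEG with $\Delta t=\infty$. *)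

From Stdlib Require Import Reals List Relations.
Import ListNotations.
Open Scope R_scope.

(* A temporal network with [m] events e_0, ..., e_{m-1} (indexed in
   increasing time order); event e_i = (u i, v i, t i).  Nodes are naturals. *)

Definition valid_tnet (m : nat) (u v : nat -> nat) (t : nat -> R) : Prop :=
  (forall i, (i < m)%nat -> u i <> v i) /\
  (forall i, (i < m)%nat -> 0 <= t i) /\
  (forall i j, (i < j)%nat -> (j < m)%nat -> t i < t j).

(* S(w;i) for a window dt; [None] encodes dt = infinity. *)
Definition inS (m : nat) (u v : nat -> nat) (t : nat -> R) (dt : option R)
    (w i k : nat) : Prop :=
  (k < m)%nat /\ (w = u k \/ w = v k) /\ 0 < t k - t i /\
  match dt with None => True | Some d => t k - t i < d end.

Definition dteg_edge (m : nat) (u v : nat -> nat) (t : nat -> R) (dt : option R)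
    (i j : nat) : Prop :=
  (i < m)%nat /\
  exists w, (w = u i \/ w = v i) /\ inS m u v t dt w i j /\
    (forall k, inS m u v t dt w i k -> (j <= k)%nat).

Definition teg_edge m u v t := dteg_edge m u v t None.

Definition teg_weakly_connected m u v t : Prop :=
  forall i j, (i < m)%nat -> (j < m)%nat ->
    clos_refl_trans nat
      (fun a b => teg_edge m u v t a b \/ teg_edge m u v t b a) i j.

Inductive signed_path (m : nat) (u v : nat -> nat) (t : nat -> R) :
    list nat -> R -> Prop :=
  | sp_one x : (x < m)%nat -> signed_path m u v t [x] 0
  | sp_fwd x y p L :
      teg_edge m u v t x y -> signed_path m u v t (y :: p) L ->
      signed_path m u v t (x :: y :: p) ((t y - t x) + L)
  | sp_bwd x y p L :
      ~ teg_edge m u v t x y -> teg_edge m u v t y x ->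
      signed_path m u v t (y :: p) L ->
      signed_path m u v t (x :: y :: p) (- (t x - t y) + L).

(* The signed length of an undirected TEG path telescopes: every step, forward
   or backward, contributes the time of its head minus the time of its tail,
   so the length is t(last) - t(first) <= t_{m-1} - t_0.  Weak connectivity
   gives a path from e_0 to e_{m-1} attaining this bound, and since event
   times are strictly increasing, only paths starting at e_0 and ending at
   e_{m-1} attain it. *)

From Stdlib Require Import Reals List Relations Lra Lia.
Import ListNotations.
Open Scope R_scope.

Section SignedPaths.

Variables (m : nat) (u v : nat -> nat) (t : nat -> R).

Lemma teg_edge_lt_time x y : teg_edge m u v t x y -> t x < t y.
Proof. intros [_ [w [_ [[_ [_ [Hlt _]]] _]]]]; lra. Qed.

Lemma teg_edge_bounded x y : teg_edge m u v t x y -> (x < m)%nat /\ (y < m)%nat.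
Proof. intros [Hx [w [_ [[Hy _] _]]]]; auto. Qed.

Lemma signed_path_hd q L :
  signed_path m u v t q L -> In (hd 0%nat q) q /\ (hd 0%nat q < m)%nat.
Proof.
  destruct 1 as [x Hx | x y p L He _ | x y p L _ He _]; simpl; split; auto.
  - exact (proj1 (teg_edge_bounded _ _ He)).
  - exact (proj2 (teg_edge_bounded _ _ He)).
Qed.

Lemma signed_path_length q L :
  signed_path m u v t q L ->
  exists b, In b q /\ (b < m)%nat /\ L = t b - t (hd 0%nat q).
Proof.
  induction 1 as [x Hx | x y p L _ _ IH | x y p L _ _ _ IH].
  - exists x; repeat split; simpl; auto; lra.
  - destruct IH as [b [Hb [Hbm ->]]].
    exists b; repeat split; simpl in *; auto; lra.
  - destruct IH as [b [Hb [Hbm ->]]].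
    exists b; repeat split; simpl in *; auto; lra.
Qed.

(* No excluded middle is needed to orient a step: an edge and its reverse
   cannot both exist, because edges go forward in time. *)
Lemma signed_path_of_walk x z :
  clos_refl_trans_1n nat
    (fun a b => teg_edge m u v t a b \/ teg_edge m u v t b a) x z ->
  (x < m)%nat -> exists p, signed_path m u v t (x :: p) (t z - t x).
Proof.
  induction 1 as [x | x y z Hxy _ IH]; intros Hx.
  - exists []; replace (t x - t x) with 0 by lra; now constructor.
  - assert (Hy : (y < m)%nat)
      by (destruct Hxy as [He | He]; apply (teg_edge_bounded _ _ He)).
    destruct (IH Hy) as [p Hp]; exists (y :: p).
    replace (t z - t x) with ((t y - t x) + (t z - t y)) by lra.
    destruct Hxy as [He | He].
    + now apply sp_fwd.
    + replace (t y - t x) with (- (t x - t y)) by lra.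
      apply sp_bwd; auto.
      intros Hrev; apply teg_edge_lt_time in He, Hrev; lra.
Qed.

Lemma signed_path_first_to_last :
  (0 < m)%nat -> teg_weakly_connected m u v t ->
  exists q, signed_path m u v t q (t (m - 1)%nat - t 0%nat).
Proof.
  intros Hm Hconn.
  destruct (signed_path_of_walk 0 (m - 1)) as [p Hp]; eauto.
  apply clos_rt_rt1n, Hconn; lia.
Qed.

End SignedPaths.

Lemma valid_tnet_first_lt m u v t i :
  valid_tnet m u v t -> (i < m)%nat -> i <> 0%nat -> t 0%nat < t i.
Proof. intros [_ [_ Hmono]] Hi Hi0; apply Hmono; lia. Qed.

Lemma valid_tnet_lt_last m u v t i :
  valid_tnet m u v t -> (i < m)%nat -> i <> (m - 1)%nat -> t i < t (m - 1)%nat.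
Proof. intros [_ [_ Hmono]] Hi Him; apply Hmono; lia. Qed.

Theorem mainTheorem1 (m : nat) (u v : nat -> nat) (t : nat -> R) :
  valid_tnet m u v t ->
  teg_weakly_connected m u v t ->
  forall (p : list nat) (L : R),
    signed_path m u v t p L ->
    (forall (q : list nat) (L' : R), signed_path m u v t q L' -> L' <= L) ->
    In 0%nat p /\ In (m - 1)%nat p.
Proof.
  intros Hnet Hconn p L Hp Hmax.
  destruct (signed_path_hd _ _ _ _ _ _ Hp) as [Ha Ham].
  destruct (signed_path_length _ _ _ _ _ _ Hp) as [b [Hb [Hbm HL]]].
  set (a := hd 0%nat p) in *.
  destruct (signed_path_first_to_last m u v t) as [q Hq]; [lia | exact Hconn |].
  assert (Hopt := Hmax _ _ Hq).
  assert (Ha0 : a = 0%nat).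
  { destruct (Nat.eq_dec a 0) as [-> | Hne]; [reflexivity | exfalso].
    pose proof (valid_tnet_first_lt _ _ _ _ _ Hnet Ham Hne).
    destruct (Nat.eq_dec b (m - 1)) as [-> | Hbne]; [lra |].
    pose proof (valid_tnet_lt_last _ _ _ _ _ Hnet Hbm Hbne); lra. }
  assert (Hbl : b = (m - 1)%nat).
  { destruct (Nat.eq_dec b (m - 1)) as [-> | Hne]; [reflexivity | exfalso].
    pose proof (valid_tnet_lt_last _ _ _ _ _ Hnet Hbm Hne).
    rewrite Ha0 in HL; lra. }
  split; [rewrite <- Ha0 | rewrite <- Hbl]; assumption.
Qed.
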